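(* Let $\Theta$ be a well-formed System $\mathsf{F_\wedge}$ context, $S, S'$ types over $\Theta$, $T$ a type over $\Theta, X<:\top$, and $t$ a term. If $\Theta \vdash t : \forall X.\,T[X\wedge S/X^-]$ and $\Theta \vdash S' <: S$, then $\Theta \vdash t\{S'\} : T[S'/X]$.
   Context: System $\mathsf{F_\wedge}$: raw types $T ::= \top \mid X \mid T \to T \mid \forall X.T \mid T \wedge T$ ($\forall X.T$ means $\forall(X<:\top).T$), up to $\alpha$-conversion. Contexts: finite sequences of $X<:T$ or $x:T$ with distinct variables, each type well-formed over the preceding part. Subtyping rules: (Var) $\Theta,X<:T,\Theta'\vdash X<:T$; (Top) $T<:\top$; (Refl); (Trans); ($\to$) from $S'<:S$, $T<:T'$ infer $S\to T<:S'\to T'$; ($\forall$) from $\Theta,X<:\top\vdash S<:T$ infer $\Theta\vdash\forall X.S<:\forall X.T$; (meet) $S\wedge S'<:S$, $S\wedge S'<:S'$, from $T<:S$, $T<:S'$ infer $T<:S\wedge S'$. Raw terms $t ::= \mathsf{top} \mid x \mid \lambda(x:T).t \mid \Lambda(X<:T).t \mid t\,t \mid t\{T\}$. Typing rules: $\Theta\vdash\mathsf{top}:\top$; $\Theta,x:T,\Theta'\vdash x:T$; (sub) from $t:T$ and $T<:T'$ infer $t:T'$; from $\Theta,x:S\vdash t:T$ infer $\Theta\vdash\lambda(x:S).t:S\to T$; from $t:S\to T$ and $s:S$ infer $t\,s:T$; from $\Theta,X<:S\vdash t:T$ infer $\Theta\vdash\Lambda(X<:S).t:\forall(X<:S).T$;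 from $\Theta\vdash t:\forall(X<:S).T$ and $\Theta\vdash S'<:S$ infer $\Theta\vdash t\{S'\}:T[S'/X]$. Mixed substitution $T[(S_-,S_+)/X]$: $X\mapsto S_+$; other variables and $\top$ unchanged; $(T\to T')[(S_-,S_+)/X]=T[(S_+,S_-)/X]\to T'[(S_-,S_+)/X]$; commutes with $\forall Y$ and $\wedge$. $T[U/X^-]$ abbreviates $T[(U,X)/X]$. *)

(* System F_/\ with de Bruijn indices (alpha-conversion is built in).
   Type variables and term variables live in separate index spaces:
   type variable index n refers to the n-th type binding X<:T counted from the
   right end of the context (term bindings are skipped); term variable index n
   refers to the n-th term binding x:T counted from the right.
   The type stored in a context entry lives over the type bindings to its left. *)
From Stdlib Require Import Arith List.
Import ListNotations.

(* Raw types  T ::= Top | X | T -> T | forall X. T | T /\ T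
   (forall X.T means forall (X<:Top).T) *)
Inductive ty : Type :=
| TTop : ty
| TVar : nat -> ty
| TArr : ty -> ty -> ty
| TAll : ty -> ty
| TMeet : ty -> ty -> ty.

Inductive tm : Type :=
| ttop : tm
| tvar : nat -> tm
| tabs : ty -> tm -> tm
| ttabs : ty -> tm -> tm
| tapp : tm -> tm -> tm
| ttapp : tm -> ty -> tm.

(* Context entries: X<:T  or  x:T ; head of the list = rightmost entry. *)
Inductive entry : Type :=
| CTy : ty -> entry
| CTm : ty -> entry.

Definition ctx := list entry.

Fixpoint tshift (c d : nat) (T : ty) : ty :=
  match T with
  | TTop => TTop
  | TVar n => if c <=? n then TVar (n + d) else TVar n
  | TArr A B => TArr (tshift c d A) (tshift c d B)
  | TAll B => TAll (tshift (S c) d B)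
  | TMeet A B => TMeet (tshift c d A) (tshift c d B)
  end.

(* ordinary capture-avoiding substitution T[U/X_j], X_j removed from context
   (U lives in the context without X_j) *)
Fixpoint tsubst (j : nat) (U : ty) (T : ty) : ty :=
  match T with
  | TTop => TTop
  | TVar n =>
      if n =? j then tshift 0 j U
      else if j <? n then TVar (pred n) else TVar n
  | TArr A B => TArr (tsubst j U A) (tsubst j U B)
  | TAll B => TAll (tsubst (S j) U B)
  | TMeet A B => TMeet (tsubst j U A) (tsubst j U B)
  end.

(* Sm, Sp live in the same context as T. *)
Fixpoint msubst (j : nat) (Sm Sp : ty) (T : ty) : ty :=
  match T with
  | TTop => TTop
  | TVar n => if n =? j then tshift 0 j Sp else TVar n
  | TArr A B => TArr (msubst j Sp Sm A) (msubst j Sm Sp B)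
  | TAll B => TAll (msubst (S j) Sm Sp B)
  | TMeet A B => TMeet (msubst j Sm Sp A) (msubst j Sm Sp B)
  end.

(* bound of the type variable with index n, expressed over the whole context *)
Fixpoint get_tybound (G : ctx) (n : nat) : option ty :=
  match G, n with
  | [], _ => None
  | CTy T :: _, 0 => Some (tshift 0 1 T)
  | CTy _ :: G', S m => option_map (tshift 0 1) (get_tybound G' m)
  | CTm _ :: G', _ => get_tybound G' n
  end.

(* type of the term variable with index n, expressed over the whole context *)
Fixpoint get_tm (G : ctx) (n : nat) : option ty :=
  match G, n with
  | [], _ => None
  | CTm T :: _, 0 => Some T
  | CTm _ :: G', S m => get_tm G' m
  | CTy _ :: G', _ => option_map (tshift 0 1) (get_tm G' n)
  end.

Fixpoint ntyvars (G : ctx) : nat :=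
  match G with
  | [] => 0
  | CTy _ :: G' => S (ntyvars G')
  | CTm _ :: G' => ntyvars G'
  end.

Fixpoint wf_ty_n (k : nat) (T : ty) : Prop :=
  match T with
  | TTop => True
  | TVar n => n < k
  | TArr A B => wf_ty_n k A /\ wf_ty_n k B
  | TAll B => wf_ty_n (S k) B
  | TMeet A B => wf_ty_n k A /\ wf_ty_n k B
  end.

Definition wf_ty (G : ctx) (T : ty) : Prop := wf_ty_n (ntyvars G) T.

(* well-formed context: each type is well formed over the preceding part
   (distinctness of variables is automatic with de Bruijn indices) *)
Fixpoint wf_ctx (G : ctx) : Prop :=
  match G with
  | [] => True
  | CTy T :: G' => wf_ty G' T /\ wf_ctx G'
  | CTm T :: G' => wf_ty G' T /\ wf_ctx G'
  end.

Inductive sub : ctx -> ty -> ty -> Prop :=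
| S_Var : forall G n T, get_tybound G n = Some T -> sub G (TVar n) T
| S_Top : forall G T, sub G T TTop
| S_Refl : forall G T, sub G T T
| S_Trans : forall G T1 T2 T3, sub G T1 T2 -> sub G T2 T3 -> sub G T1 T3
| S_Arr : forall G S1 S2 T1 T2,
    sub G S2 S1 -> sub G T1 T2 -> sub G (TArr S1 T1) (TArr S2 T2)
| S_All : forall G S1 T1,
    sub (CTy TTop :: G) S1 T1 -> sub G (TAll S1) (TAll T1)
| S_MeetL : forall G S1 S2, sub G (TMeet S1 S2) S1
| S_MeetR : forall G S1 S2, sub G (TMeet S1 S2) S2
| S_Meet : forall G T S1 S2, sub G T S1 -> sub G T S2 -> sub G T (TMeet S1 S2).

(* Typing.  Since types only contain the quantifier forall X.T = forall(X<:Top).T,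
   the rules producing / consuming forall(X<:S).T are instantiated at S = Top. *)
Inductive typing : ctx -> tm -> ty -> Prop :=
| T_Top : forall G, typing G ttop TTop
| T_Var : forall G n T, get_tm G n = Some T -> typing G (tvar n) T
| T_Sub : forall G t T T', typing G t T -> sub G T T' -> typing G t T'
| T_Abs : forall G S1 t T,
    typing (CTm S1 :: G) t T -> typing G (tabs S1 t) (TArr S1 T)
| T_App : forall G t s S1 T,
    typing G t (TArr S1 T) -> typing G s S1 -> typing G (tapp t s) T
| T_TAbs : forall G t T,
    typing (CTy TTop :: G) t T -> typing G (ttabs TTop t) (TAll T)
| T_TApp : forall G t T S',
    typing G t (TAll T) -> sub G S' TTop -> typing G (ttapp t S') (tsubst 0 S' T).

(* Instantiating [forall X. T[X /\ S / X^-]] at [S'] yields [T] with [S' /\ S] at the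
   negative occurrences of [X] and [S'] at the positive ones.  Mixed substitution is
   monotone: covariant in the positive component and contravariant in the negative
   one.  As [S' <: S' /\ S] whenever [S' <: S], this type is a subtype of [T[S'/X]],
   and subsumption concludes. *)
From Stdlib Require Import List Arith Lia.
Import ListNotations.

Ltac index_cases :=
  repeat (cbn [tshift tsubst]; match goal with
  | |- context [?a <=? ?b] => destruct (Nat.leb_spec a b)
  | |- context [?a =? ?b] => destruct (Nat.eqb_spec a b)
  | |- context [?a <? ?b] => destruct (Nat.ltb_spec a b)
  end); cbn [tshift tsubst]; try (f_equal; lia); try lia.

Lemma tshift_zero (T : ty) (c : nat) : tshift c 0 T = T.
Proof. revert c; induction T; intros; simpl; try index_cases; f_equal; auto. Qed.

Lemma tshift_tshift_merge (T : ty) (c c' a b : nat) :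
  c <= c' <= c + a -> tshift c' b (tshift c a T) = tshift c (a + b) T.
Proof.
  revert c c'; induction T; intros c c' Hc; simpl; try (index_cases; fail);
    f_equal; auto; apply IHT; lia.
Qed.

Lemma tshift_tshift_comm (T : ty) (c0 c : nat) :
  c0 <= c -> tshift c0 1 (tshift c 1 T) = tshift (S c) 1 (tshift c0 1 T).
Proof.
  revert c0 c; induction T; intros c0 c Hc; simpl; try (index_cases; fail);
    f_equal; auto; apply IHT; lia.
Qed.

Lemma tsubst_tshift_cancel (T U : ty) (c : nat) : tsubst c U (tshift c 1 T) = T.
Proof. revert c; induction T; intros; simpl; try (index_cases; fail); f_equal; auto. Qed.

Lemma tsubst_tshift_comm (T U : ty) (c j : nat) :
  tsubst (c + j) U (tshift c j T) = tshift c j (tsubst c U T).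
Proof.
  revert c; induction T; intros c; simpl; try (f_equal; auto; fail).
  - index_cases. rewrite tshift_tshift_merge by lia. f_equal; lia.
  - f_equal. exact (IHT (S c)).
Qed.

(* [ctx_ins c G] inserts a binding [X <: Top] so that [X] gets type index [c]. *)
Fixpoint ctx_ins (c : nat) (G : ctx) : ctx :=
  match c, G with
  | 0, _ => CTy TTop :: G
  | S c', CTy T :: G' => CTy (tshift c' 1 T) :: ctx_ins c' G'
  | S _, CTm T :: G' => CTm T :: ctx_ins c G'
  | S _, [] => []
  end.

Lemma get_tybound_ctx_ins (G : ctx) (c n : nat) :
  get_tybound (ctx_ins c G) (if c <=? n then S n else n)
  = option_map (tshift c 1) (get_tybound G n).
Proof.
  revert c n; induction G as [|[T|T] G IH]; intros [|c] n; try reflexivity.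
  - destruct n as [|m]; simpl.
    + f_equal. apply tshift_tshift_comm. lia.
    + specialize (IH c m).
      destruct (c <=? m); simpl in *; rewrite IH;
        destruct (get_tybound G m); simpl; auto;
        f_equal; apply tshift_tshift_comm; lia.
  - exact (IH (S c) n).
Qed.

Lemma sub_tshift (G : ctx) (A B : ty) (c : nat) :
  sub G A B -> sub (ctx_ins c G) (tshift c 1 A) (tshift c 1 B).
Proof.
  intros HAB; revert c; induction HAB; intros c; simpl; try (econstructor; eauto; fail).
  - pose proof (get_tybound_ctx_ins G c n) as E. rewrite H in E. simpl in E.
    destruct (c <=? n); apply S_Var; rewrite <- E; f_equal; lia.
  - apply S_All. apply (IHHAB (S c)).
Qed.

Lemma sub_weaken_tshift (G : ctx) (A B : ty) (j : nat) :
  sub G (tshift 0 j A) (tshift 0 j B) ->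
  sub (CTy TTop :: G) (tshift 0 (S j) A) (tshift 0 (S j) B).
Proof.
  intros H. apply (sub_tshift _ _ _ 0) in H.
  rewrite !tshift_tshift_merge, Nat.add_1_r in H by lia.
  destruct G as [|[] ]; exact H.
Qed.

(* The bounds are stated at binder depth [j], where they appear shifted by [j]. *)
Lemma sub_tsubst_msubst_at (T Sm Sp U : ty) (j : nat) (G : ctx) :
  sub G (tshift 0 j (tsubst 0 U Sp)) (tshift 0 j U) ->
  sub G (tshift 0 j U) (tshift 0 j (tsubst 0 U Sm)) ->
  sub G (tsubst j U (msubst j Sm Sp T)) (tsubst j U T) /\
  sub G (tsubst j U T) (tsubst j U (msubst j Sp Sm T)).
Proof.
  revert Sm Sp j G; induction T as [| n | T1 IH1 T2 IH2 | T IH | T1 IH1 T2 IH2];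
    intros Sm Sp j G Hp Hm; cbn [msubst].
  - split; apply S_Refl.
  - destruct (Nat.eqb_spec n j) as [-> | Hn].
    + rewrite <- (tsubst_tshift_comm Sp U 0 j), <- (tsubst_tshift_comm Sm U 0 j) in *.
      cbn [tsubst]. rewrite Nat.eqb_refl. split; assumption.
    + split; apply S_Refl.
  - destruct (IH1 Sm Sp j G) as [H1 H1'], (IH2 Sm Sp j G) as [H2 H2']; auto.
    split; apply S_Arr; assumption.
  - apply sub_weaken_tshift in Hp, Hm.
    destruct (IH Sm Sp (S j) _ Hp Hm) as [H H'].
    split; apply S_All; assumption.
  - destruct (IH1 Sm Sp j G) as [H1 H1'], (IH2 Sm Sp j G) as [H2 H2']; auto.
    split; apply S_Meet;
      solve [ eapply S_Trans; [apply S_MeetL | assumption]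
            | eapply S_Trans; [apply S_MeetR | assumption] ].
Qed.

Lemma sub_tsubst_msubst (T Sm Sp U : ty) (G : ctx) :
  sub G (tsubst 0 U Sp) U -> sub G U (tsubst 0 U Sm) ->
  sub G (tsubst 0 U (msubst 0 Sm Sp T)) (tsubst 0 U T).
Proof.
  intros Hp Hm. apply (sub_tsubst_msubst_at T Sm Sp U 0 G); rewrite !tshift_zero; assumption.
Qed.

Theorem proposition5p1 :
  forall (G : ctx) (S S' T : ty) (t : tm),
    wf_ctx G ->
    wf_ty G S ->
    wf_ty G S' ->
    wf_ty (CTy TTop :: G) T ->
    typing G t (TAll (msubst 0 (TMeet (TVar 0) (tshift 0 1 S)) (TVar 0) T)) ->
    sub G S' S ->
    typing G (ttapp t S') (tsubst 0 S' T).
Proof.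
  intros G S S' T t _ _ _ _ Ht HS.
  eapply T_Sub; [apply T_TApp; [exact Ht | apply S_Top] |].
  apply sub_tsubst_msubst; simpl; rewrite tshift_zero.
  - apply S_Refl.
  - rewrite tsubst_tshift_cancel. apply S_Meet; [apply S_Refl | exact HS].
Qed.
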